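(* Let $\delta:\,]0,+\infty[\to\mathbb R$ be nonnegative, bounded and continuously differentiable, and consider $\ddot r+\delta(r)\dot r=-1/r^2$, $r>0$. If $r_1\not\equiv r_2$ are two solutions and $r_1(t_* )=r_2(t_* )$ for some $t_*$, then $r_1(t)\neq r_2(t)$ for every $t\neq t_*$ in the common interval of definition of $r_1$ and $r_2$. *)

From Stdlib Require Import Reals.
From Coquelicot Require Import Coquelicot.
Open Scope R_scope.

Definition in_open_interval (a b : Rbar) (t : R) : Prop :=
  Rbar_lt a (Finite t) /\ Rbar_lt (Finite t) b.

Definition admissible_delta (delta : R -> R) : Prop :=
  (forall x, 0 < x -> 0 <= delta x) /\
  (exists M, forall x, 0 < x -> Rabs (delta x) <= M) /\
  (forall x, 0 < x -> ex_derive delta x /\ continuous (Derive delta) x).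

Definition is_solution (delta : R -> R) (a b : Rbar) (r : R -> R) : Prop :=
  forall t, in_open_interval a b t ->
    0 < r t /\
    ex_derive r t /\
    ex_derive (Derive r) t /\
    Derive (Derive r) t + delta (r t) * Derive r t = - / (r t ^ 2).

(* Writing Δ for a primitive of δ, the equation reads (r' + Δ(r))' = -1/r^2.
   For two solutions put p = r1 - r2 and q = (r1' + Δ(r1)) - (r2' + Δ(r2)): then
   q' = 1/r2^2 - 1/r1^2 has the sign of p, and p' = q wherever p vanishes.
   If p and q vanish at the same time, a Gronwall estimate for p^2 + q^2 (δ is
   bounded and r1, r2 are bounded below on compact intervals) gives r1 = r2
   everywhere.  Otherwise, at the earlier of two common points, say with q > 0,
   p becomes positive; up to the next zero z of p, q can only increase, so
   p'(z) = q(z) > 0, which is impossible at the first zero of a positive function. *)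

From Stdlib Require Import Reals Lra.
From Coquelicot Require Import Coquelicot.
Open Scope R_scope.

Lemma is_derive_continuity_pt (f : R -> R) (x l : R) :
  is_derive f x l -> continuity_pt f x.
Proof.
  intros Hf. apply derivable_continuous_pt.
  exists l. now apply is_derive_Reals.
Qed.

Lemma continuity_pt_pos_near (f : R -> R) (x : R) :
  continuity_pt f x -> 0 < f x ->
  exists d, 0 < d /\ forall y, Rabs (y - x) < d -> 0 < f y.
Proof.
  intros Hc Hx.
  destruct (proj1 (continuity_pt_locally f x) Hc (mkposreal _ Hx)) as [d Hd].
  exists d. split; [apply cond_pos|]. intros y Hy.
  specialize (Hd y Hy). simpl in Hd. apply Rabs_def2 in Hd. lra.
Qed.

Lemma first_root_after (p : R -> R) (x y : R) :
  x < y -> (forall s, x <= s <= y -> continuity_pt p s) ->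
  0 < p x -> p y <= 0 ->
  exists z, x < z <= y /\ p z = 0 /\ forall w, x <= w < z -> 0 < p w.
Proof.
  intros Hxy Hc Hx Hy.
  set (E := fun s => x <= s <= y /\ forall w, x <= w <= s -> 0 < p w).
  assert (Ex : E x).
  { split; [lra|]. intros w Hw. now replace w with x by lra. }
  destruct (completeness E) as [z [Hub Hlub]].
  { exists y. intros s [Hs _]. lra. }
  { now exists x. }
  assert (Hxz : x <= z) by now apply Hub.
  assert (Hzy : z <= y) by (apply Hlub; intros s [Hs _]; lra).
  assert (Hbelow : forall w, x <= w < z -> 0 < p w).
  { intros w Hw. destruct (Rle_or_lt (p w) 0) as [Hpw|Hpw]; [exfalso|exact Hpw].
    assert (z <= w); [|lra].
    apply Hlub. intros s [_ Hs]. destruct (Rle_or_lt s w); [lra|].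
    specialize (Hs w ltac:(lra)). lra. }
  assert (Hz : p z = 0).
  { destruct (Rtotal_order (p z) 0) as [Hneg|[Hzero|Hpos]]; [exfalso|exact Hzero|exfalso].
    - assert (Hxz' : x < z) by (destruct Hxz as [| <-]; lra).
      destruct (continuity_pt_pos_near (fun s => - p s) z
                  (continuity_pt_opp p z (Hc z ltac:(lra))) ltac:(lra)) as [d [Hd Hnear]].
      set (w := Rmax (z - d / 2) x).
      assert (Hw : x <= w < z) by (unfold w; apply Rmax_case_strong; lra).
      assert (0 < - p w); [|specialize (Hbelow w Hw); lra].
      apply Hnear. rewrite Rabs_left; unfold w; apply Rmax_case_strong; lra.
    - destruct (continuity_pt_pos_near p z (Hc z ltac:(lra)) Hpos) as [d [Hd Hnear]].
      assert (Hzy' : z < y) by (destruct Hzy as [| ->]; lra).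
      set (s := Rmin (z + d / 2) y).
      assert (Hs : E s).
      { split; [unfold s; apply Rmin_case_strong; lra|].
        intros w Hw. destruct (Rlt_or_le w z); [apply Hbelow; lra|].
        apply Hnear. rewrite Rabs_right; revert Hw; unfold s; apply Rmin_case_strong; lra. }
      assert (Hsz : s <= z) by now apply Hub.
      revert Hsz; unfold s; apply Rmin_case_strong; lra. }
  exists z. split; [|split; [exact Hz|exact Hbelow]].
  destruct Hxz as [| <-]; lra.
Qed.

Lemma is_derive_root_sign (p : R -> R) (s l : R) :
  is_derive p s l -> 0 < l -> p s = 0 ->
  exists d, 0 < d /\ forall h, 0 < h < d -> p (s - h) < 0 < p (s + h).
Proof.
  intros Hp Hl Hs. apply is_derive_Reals in Hp.
  destruct (Hp (l / 2) ltac:(lra)) as [d Hd].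
  assert (Hquot : forall k, k <> 0 -> Rabs k < d -> 0 < p (s + k) / k).
  { intros k Hk Hkd. specialize (Hd k Hk Hkd).
    rewrite Hs, Rminus_0_r in Hd. apply Rabs_def2 in Hd. lra. }
  exists d. split; [apply cond_pos|]. intros h Hh.
  assert (Hl' := Hquot (- h) ltac:(lra) ltac:(rewrite Rabs_left; lra)).
  assert (Hr := Hquot h ltac:(lra) ltac:(rewrite Rabs_right; lra)).
  replace (s - h) with (s + - h) by ring.
  split.
  - replace (p (s + - h)) with (- (p (s + - h) / - h * h)) by (field; lra). nra.
  - replace (p (s + h)) with (p (s + h) / h * h) by (field; lra). nra.
Qed.

Lemma is_derive_nonneg_le (f df : R -> R) (x y : R) :
  x <= y ->
  (forall s, x <= s <= y -> is_derive f s (df s)) ->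
  (forall s, x < s < y -> 0 <= df s) ->
  f x <= f y.
Proof.
  intros [Hxy| ->] Hf Hdf; [|lra].
  destruct (MVT_cor2 f df x y Hxy) as [c [Hc Hcxy]].
  { intros c Hc. now apply is_derive_Reals, Hf. }
  specialize (Hdf c Hcxy). nra.
Qed.

Lemma is_derive_mul_exp (E : R -> R) (C x dE : R) :
  is_derive E x dE ->
  is_derive (fun s => E s * exp (C * s)) x ((dE + C * E x) * exp (C * x)).
Proof.
  intros HE. auto_derive; [now exists dE|].
  erewrite is_derive_unique by exact HE. ring.
Qed.

Lemma is_derive_sum_sq (f g : R -> R) (x df dg : R) :
  is_derive f x df -> is_derive g x dg ->
  is_derive (fun s => f s ^ 2 + g s ^ 2) x (2 * f x * df + 2 * g x * dg).
Proof.
  intros Hf Hg. auto_derive; [split; [now exists df | split; [now exists dg | exact I]]|].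
  erewrite is_derive_unique by exact Hf. erewrite is_derive_unique by exact Hg. ring.
Qed.

Lemma gronwall_zero (E dE : R -> R) (C lo hi t0 : R) :
  lo <= t0 <= hi ->
  (forall s, lo <= s <= hi -> is_derive E s (dE s)) ->
  (forall s, lo <= s <= hi -> 0 <= E s) ->
  (forall s, lo <= s <= hi -> Rabs (dE s) <= C * E s) ->
  E t0 = 0 ->
  forall s, lo <= s <= hi -> E s = 0.
Proof.
  intros Ht0 HE Hpos Hbound H0 s Hs.
  assert (Hexp : forall k, E s * exp (k * s) <= 0 -> E s = 0).
  { intros k Hk. pose proof (exp_pos (k * s)). pose proof (Hpos s Hs). nra. }
  destruct (Rle_or_lt s t0) as [Hst|Hts].
  - apply (Hexp C).
    rewrite <- (Rmult_0_l (exp (C * t0))), <- H0.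
    apply (is_derive_nonneg_le (fun x => E x * exp (C * x))
             (fun x => (dE x + C * E x) * exp (C * x)) s t0 Hst).
    + intros x Hx. apply is_derive_mul_exp, HE. lra.
    + intros x Hx. apply Rmult_le_pos; [|apply Rlt_le, exp_pos].
      assert (Hx' := Hbound x ltac:(lra)). apply Rabs_le_between in Hx'. lra.
  - apply (Hexp (- C)).
    rewrite <- (Rmult_0_l (exp (- C * t0))), <- H0.
    apply Ropp_le_cancel.
    apply (is_derive_nonneg_le (fun x => - (E x * exp (- C * x)))
             (fun x => - ((dE x + - C * E x) * exp (- C * x))) t0 s (Rlt_le _ _ Hts)).
    + intros x Hx. apply (is_derive_opp (fun x => E x * exp (- C * x))).
      apply is_derive_mul_exp, HE. lra.
    + intros x Hx. assert (Hx' := Hbound x ltac:(lra)). apply Rabs_le_between in Hx'.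
      pose proof (exp_pos (- C * x)). nra.
Qed.

Lemma pos_after_transversal_root (p q dq : R -> R) (al be : R) :
  al < be ->
  (forall s, al <= s <= be -> continuity_pt p s) ->
  (forall s, al <= s <= be -> is_derive q s (dq s)) ->
  (forall s, al <= s <= be -> 0 <= p s * dq s) ->
  (forall s, al <= s <= be -> p s = 0 -> is_derive p s (q s)) ->
  p al = 0 -> 0 < q al -> 0 < p be.
Proof.
  intros Hab Hc Hq Hsign Hroot Hal Hqal.
  destruct (Rlt_or_le 0 (p be)) as [|Hbe]; [assumption|exfalso].
  destruct (is_derive_root_sign p al (q al) (Hroot al ltac:(lra) Hal) Hqal Hal)
    as [d [Hd Hnear_al]].
  set (h := Rmin d (be - al) / 2).
  assert (Hh : 0 < h < d /\ h < be - al) by (unfold h; apply Rmin_case_strong; lra).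
  assert (Hpos_h : 0 < p (al + h)) by apply Hnear_al, Hh.
  destruct (first_root_after p (al + h) be ltac:(lra) (fun s Hs => Hc s ltac:(lra))
              Hpos_h Hbe) as [z [Hz [Hpz Hbefore_z]]].
  assert (Hpos : forall w, al < w < z -> 0 < p w).
  { intros w Hw. destruct (Rle_or_lt w (al + h)).
    - replace w with (al + (w - al)) by ring. apply Hnear_al. lra.
    - apply Hbefore_z. lra. }
  assert (Hqz : q al <= q z).
  { apply (is_derive_nonneg_le q dq); [lra| |].
    - intros s Hs. apply Hq. lra.
    - intros s Hs. specialize (Hsign s ltac:(lra)). specialize (Hpos s Hs). nra. }
  destruct (is_derive_root_sign p z (q z) (Hroot z ltac:(lra) Hpz) ltac:(lra) Hpz)
    as [d' [Hd' Hnear_z]].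
  set (h' := Rmin d' (z - al) / 2).
  assert (Hh' : 0 < h' < d' /\ h' < z - al) by (unfold h'; apply Rmin_case_strong; lra).
  assert (p (z - h') < 0) by apply Hnear_z, Hh'.
  assert (0 < p (z - h')) by (apply Hpos; lra).
  lra.
Qed.

Lemma transversal_root_isolated (p q dq : R -> R) (al be : R) :
  al < be ->
  (forall s, al <= s <= be -> continuity_pt p s) ->
  (forall s, al <= s <= be -> is_derive q s (dq s)) ->
  (forall s, al <= s <= be -> 0 <= p s * dq s) ->
  (forall s, al <= s <= be -> p s = 0 -> is_derive p s (q s)) ->
  p al = 0 -> q al <> 0 -> p be <> 0.
Proof.
  intros Hab Hc Hq Hsign Hroot Hal Hqal.
  destruct (Rlt_or_le 0 (q al)) as [Hpos|Hneg].
  - apply Rgt_not_eq. now apply (pos_after_transversal_root p q dq al be).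
  - enough (0 < - p be) by lra.
    apply (pos_after_transversal_root (fun s => - p s) (fun s => - q s) (fun s => - dq s) al be);
      try lra.
    + intros s Hs. now apply continuity_pt_opp, Hc.
    + intros s Hs. now apply (is_derive_opp q), Hq.
    + intros s Hs. specialize (Hsign s Hs). lra.
    + intros s Hs Hs0. apply (is_derive_opp p), Hroot; lra.
Qed.

Lemma in_open_interval_between (a b : Rbar) (x y s : R) :
  in_open_interval a b x -> in_open_interval a b y -> x <= s <= y ->
  in_open_interval a b s.
Proof.
  intros [Hax _] [_ Hyb] Hs. split.
  - now apply Rbar_lt_le_trans with x.
  - now apply Rbar_le_lt_trans with y.
Qed.

Lemma pos_lower_bound_on_segment (f : R -> R) (lo hi : R) :
  lo <= hi ->
  (forall s, lo <= s <= hi -> continuity_pt f s) ->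
  (forall s, lo <= s <= hi -> 0 < f s) ->
  exists m, 0 < m /\ forall s, lo <= s <= hi -> m <= f s.
Proof.
  intros Hlh Hc Hpos.
  destruct (continuity_ab_min f lo hi Hlh Hc) as [s0 [Hmin Hs0]].
  exists (f s0). split; [now apply Hpos | exact Hmin].
Qed.

Lemma inv_sq_lipschitz (m x y : R) :
  0 < m -> m <= x -> m <= y ->
  Rabs (/ y ^ 2 - / x ^ 2) <= 2 / m ^ 3 * Rabs (x - y).
Proof.
  intros Hm Hx Hy.
  assert (Hm3 : 0 < m ^ 3) by now apply pow_lt.
  assert (Hxyy : / (x * y * y) <= / m ^ 3).
  { apply Rinv_le_contravar; [exact Hm3|].
    assert (m * m <= y * y) by nra. simpl. nra. }
  assert (Hxxy : / (x * x * y) <= / m ^ 3).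
  { apply Rinv_le_contravar; [exact Hm3|].
    assert (m * m <= x * x) by nra. simpl. nra. }
  assert (0 < / (x * y * y)) by (apply Rinv_0_lt_compat; apply Rmult_lt_0_compat; nra).
  assert (0 < / (x * x * y)) by (apply Rinv_0_lt_compat; apply Rmult_lt_0_compat; nra).
  replace (/ y ^ 2 - / x ^ 2) with ((x - y) * (/ (x * y * y) + / (x * x * y))) by (field; lra).
  rewrite Rabs_mult, (Rmult_comm (2 / m ^ 3)), (Rabs_right (_ + _)) by lra.
  apply Rmult_le_compat_l; [apply Rabs_pos|]. unfold Rdiv. lra.
Qed.

Lemma energy_derivative_bound (P Q dP dQ K M : R) :
  0 <= K -> 0 <= M ->
  Rabs dP <= Rabs Q + M * Rabs P -> Rabs dQ <= K * Rabs P ->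
  Rabs (2 * P * dP + 2 * Q * dQ) <= (1 + K + 2 * M) * (P ^ 2 + Q ^ 2).
Proof.
  intros HK HM HdP HdQ.
  assert (Htri : Rabs (2 * P * dP + 2 * Q * dQ)
                 <= 2 * Rabs P * Rabs dP + 2 * Rabs Q * Rabs dQ).
  { eapply Rle_trans; [apply Rabs_triang|].
    rewrite !Rabs_mult, (Rabs_right 2) by lra. lra. }
  rewrite <- (pow2_abs P), <- (pow2_abs Q).
  pose proof (Rabs_pos P). pose proof (Rabs_pos Q).
  assert (Rabs P * Rabs dP <= Rabs P * (Rabs Q + M * Rabs P)) by now apply Rmult_le_compat_l.
  assert (Rabs Q * Rabs dQ <= Rabs Q * (K * Rabs P)) by now apply Rmult_le_compat_l.
  assert (0 <= K * (Rabs P - Rabs Q) ^ 2) by (apply Rmult_le_pos; [lra | apply pow2_ge_0]).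
  assert (0 <= (Rabs P - Rabs Q) ^ 2) by apply pow2_ge_0.
  assert (0 <= M * Rabs Q ^ 2) by (apply Rmult_le_pos; [lra | apply pow2_ge_0]).
  nra.
Qed.

Definition damping_integral (delta : R -> R) (x : R) : R := RInt delta 1 x.

Definition damped_velocity (delta : R -> R) (r : R -> R) (t : R) : R :=
  Derive r t + damping_integral delta (r t).

Section Damping.

Variable delta : R -> R.
Hypothesis delta_admissible : admissible_delta delta.

Lemma admissible_delta_continuous (x : R) : 0 < x -> continuous delta x.
Proof.
  intros Hx. apply (ex_derive_continuous (K := R_AbsRing) (V := R_NormedModule)).
  now apply delta_admissible.
Qed.

Lemma is_derive_damping_integral (x : R) :
  0 < x -> is_derive (damping_integral delta) x (delta x).
Proof.
  intros Hx. apply is_derive_RInt with (a := 1); [|now apply admissible_delta_continuous].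
  assert (Hx2 : 0 < x / 2) by lra. exists (mkposreal _ Hx2).
  intros y Hy. change (Rabs (y - x) < x / 2) in Hy. apply Rabs_def2 in Hy.
  apply (RInt_correct (V := R_CompleteNormedModule)), ex_RInt_continuous. intros z Hz.
  apply admissible_delta_continuous.
  assert (0 < Rmin 1 y) by (apply Rmin_glb_lt; lra). lra.
Qed.

Lemma damping_integral_lipschitz (M x y : R) :
  (forall z, 0 < z -> Rabs (delta z) <= M) -> 0 < x -> 0 < y ->
  Rabs (damping_integral delta x - damping_integral delta y) <= M * Rabs (x - y).
Proof.
  intros HM Hx Hy.
  assert (Hmin : 0 < Rmin y x) by now apply Rmin_glb_lt.
  destruct (MVT_gen (damping_integral delta) y x delta) as [c [Hc ->]].
  - intros z Hz. apply is_derive_damping_integral. simpl in Hz. lra.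
  - intros z Hz. apply (is_derive_continuity_pt _ _ (delta z)).
    apply is_derive_damping_integral. simpl in Hz. lra.
  - simpl in Hc. rewrite Rabs_mult. apply Rmult_le_compat_r; [apply Rabs_pos|].
    apply HM. lra.
Qed.

Lemma is_derive_damped_velocity (a b : Rbar) (r : R -> R) (t : R) :
  is_solution delta a b r -> in_open_interval a b t ->
  is_derive (damped_velocity delta r) t (- / r t ^ 2).
Proof.
  intros Hr Ht. destruct (Hr t Ht) as [Hpos [Hdr [Hddr <-]]].
  apply (is_derive_plus (K := R_AbsRing) (V := R_NormedModule)).
  - now apply Derive_correct.
  - replace (delta (r t) * Derive r t) with (scal (Derive r t) (delta (r t)))
      by (unfold scal; simpl; unfold mult; simpl; ring).
    apply (is_derive_comp (damping_integral delta) r).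
    + now apply is_derive_damping_integral.
    + now apply Derive_correct.
Qed.

End Damping.

Section TwoSolutions.

Variables (delta : R -> R) (a b : Rbar) (r1 r2 : R -> R).
Hypothesis delta_admissible : admissible_delta delta.
Hypothesis r1_solution : is_solution delta a b r1.
Hypothesis r2_solution : is_solution delta a b r2.

Let gap (t : R) : R := r1 t - r2 t.
Let velocity_gap (t : R) : R := damped_velocity delta r1 t - damped_velocity delta r2 t.
Let integral_gap (t : R) : R :=
  damping_integral delta (r1 t) - damping_integral delta (r2 t).
Let force_gap (t : R) : R := / r2 t ^ 2 - / r1 t ^ 2.

Lemma is_derive_gap (t : R) :
  in_open_interval a b t -> is_derive gap t (velocity_gap t - integral_gap t).
Proof.
  intros Ht. replace (velocity_gap t - integral_gap t) with (Derive r1 t - Derive r2 t)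
    by (unfold velocity_gap, integral_gap, damped_velocity; ring).
  apply (is_derive_minus (K := R_AbsRing) (V := R_NormedModule)); apply Derive_correct.
  - now apply r1_solution.
  - now apply r2_solution.
Qed.

Lemma is_derive_gap_at_root (t : R) :
  in_open_interval a b t -> gap t = 0 -> is_derive gap t (velocity_gap t).
Proof.
  intros Ht Hroot.
  replace (velocity_gap t) with (velocity_gap t - integral_gap t); [now apply is_derive_gap|].
  unfold integral_gap. unfold gap in Hroot. replace (r1 t) with (r2 t) by lra. ring.
Qed.

Lemma is_derive_velocity_gap (t : R) :
  in_open_interval a b t -> is_derive velocity_gap t (force_gap t).
Proof.
  intros Ht. replace (force_gap t) with (- / r1 t ^ 2 - - / r2 t ^ 2)
    by (unfold force_gap; ring).
  apply (is_derive_minus (K := R_AbsRing) (V := R_NormedModule));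
    now apply (is_derive_damped_velocity delta delta_admissible a b).
Qed.

Lemma gap_force_gap_nonneg (t : R) :
  in_open_interval a b t -> 0 <= gap t * force_gap t.
Proof.
  intros Ht. destruct (r1_solution t Ht) as [H1 _]. destruct (r2_solution t Ht) as [H2 _].
  unfold gap, force_gap.
  replace ((r1 t - r2 t) * (/ r2 t ^ 2 - / r1 t ^ 2))
    with ((r1 t - r2 t) ^ 2 * (r1 t + r2 t) * / (r1 t ^ 2 * r2 t ^ 2)) by (field; lra).
  apply Rmult_le_pos; [apply Rmult_le_pos; [apply pow2_ge_0 | lra]|].
  apply Rlt_le, Rinv_0_lt_compat, Rmult_lt_0_compat; now apply pow_lt.
Qed.

Lemma energy_derivative_gap_bound (lo hi : R) :
  in_open_interval a b lo -> in_open_interval a b hi -> lo <= hi ->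
  exists C, forall t, lo <= t <= hi ->
    Rabs (2 * gap t * (velocity_gap t - integral_gap t) + 2 * velocity_gap t * force_gap t)
    <= C * (gap t ^ 2 + velocity_gap t ^ 2).
Proof.
  intros Hlo Hhi Hlh.
  assert (Hin : forall t, lo <= t <= hi -> in_open_interval a b t)
    by (intros t; now apply in_open_interval_between).
  pose proof delta_admissible as [_ [[M HM] _]].
  assert (HM0 : 0 <= M) by (eapply Rle_trans; [apply Rabs_pos | apply (HM 1); lra]).
  assert (Hlower : forall r, is_solution delta a b r ->
            exists m, 0 < m /\ forall t, lo <= t <= hi -> m <= r t).
  { intros r Hr. apply pos_lower_bound_on_segment; [exact Hlh| |].
    - intros t Ht. destruct (Hr t (Hin t Ht)) as [_ [[l Hl] _]].
      exact (is_derive_continuity_pt r t l Hl).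
    - intros t Ht. now apply Hr, Hin. }
  destruct (Hlower r1 r1_solution) as [m1 [Hm1 Hr1m]].
  destruct (Hlower r2 r2_solution) as [m2 [Hm2 Hr2m]].
  assert (Hm : exists m, 0 < m /\ m <= m1 /\ m <= m2).
  { exists (Rmin m1 m2). split; [now apply Rmin_glb_lt | split; [apply Rmin_l | apply Rmin_r]]. }
  destruct Hm as [m [Hm [Hmm1 Hmm2]]].
  exists (1 + 2 / m ^ 3 + 2 * M). intros t Ht.
  assert (Hm1t := Hr1m t Ht). assert (Hm2t := Hr2m t Ht).
  apply energy_derivative_bound; [| exact HM0 | |].
  - apply Rlt_le, Rdiv_lt_0_compat; [lra | now apply pow_lt].
  - eapply Rle_trans; [apply Rabs_triang|]. rewrite Rabs_Ropp.
    apply Rplus_le_compat_l, damping_integral_lipschitz;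
      [exact delta_admissible | exact HM | lra | lra].
  - unfold force_gap, gap. apply inv_sq_lipschitz; lra.
Qed.

Lemma solutions_eq_of_same_initial_data (t0 : R) :
  in_open_interval a b t0 -> r1 t0 = r2 t0 -> Derive r1 t0 = Derive r2 t0 ->
  forall t, in_open_interval a b t -> r1 t = r2 t.
Proof.
  intros Ht0 Hr Hv t Ht.
  set (lo := Rmin t0 t). set (hi := Rmax t0 t).
  assert (Hlo : in_open_interval a b lo) by (unfold lo; now apply Rmin_case).
  assert (Hhi : in_open_interval a b hi) by (unfold hi; now apply Rmax_case).
  assert (Hlh : lo <= hi) by (unfold lo, hi; apply Rmin_case_strong; apply Rmax_case_strong; lra).
  assert (Hin : forall s, lo <= s <= hi -> in_open_interval a b s)
    by (intros s; now apply in_open_interval_between).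
  destruct (energy_derivative_gap_bound lo hi Hlo Hhi Hlh) as [C HC].
  assert (Henergy : gap t ^ 2 + velocity_gap t ^ 2 = 0).
  { apply (gronwall_zero (fun s => gap s ^ 2 + velocity_gap s ^ 2)
             (fun s => 2 * gap s * (velocity_gap s - integral_gap s)
                       + 2 * velocity_gap s * force_gap s) C lo hi t0).
    - split; [apply Rmin_l | apply Rmax_l].
    - intros s Hs. apply is_derive_sum_sq; [apply is_derive_gap | apply is_derive_velocity_gap];
        now apply Hin.
    - intros s Hs. pose proof (pow2_ge_0 (gap s)). pose proof (pow2_ge_0 (velocity_gap s)). lra.
    - exact HC.
    - unfold gap, velocity_gap, damped_velocity. rewrite Hr, Hv. ring.
    - split; [apply Rmin_r | apply Rmax_r]. }
  pose proof (pow2_ge_0 (gap t)). pose proof (pow2_ge_0 (velocity_gap t)).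
  assert (gap t ^ 2 = 0) by lra. unfold gap in *. nra.
Qed.

Lemma solutions_cannot_meet_again (al be : R) :
  in_open_interval a b al -> in_open_interval a b be -> al < be ->
  r1 al = r2 al -> Derive r1 al <> Derive r2 al -> r1 be <> r2 be.
Proof.
  intros Hal Hbe Hab Hr Hv Hrbe.
  assert (Hin : forall s, al <= s <= be -> in_open_interval a b s)
    by (intros s; now apply in_open_interval_between).
  apply (transversal_root_isolated gap velocity_gap force_gap al be Hab).
  - intros s Hs. apply (is_derive_continuity_pt _ _ _ (is_derive_gap s (Hin s Hs))).
  - intros s Hs. now apply is_derive_velocity_gap, Hin.
  - intros s Hs. now apply gap_force_gap_nonneg, Hin.
  - intros s Hs. now apply is_derive_gap_at_root, Hin.
  - unfold gap. lra.
  - unfold velocity_gap, damped_velocity. rewrite Hr. lra.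
  - unfold gap. lra.
Qed.

End TwoSolutions.

Theorem lemma3p1 (delta : R -> R) (a b : Rbar) (r1 r2 : R -> R) (tstar : R) :
  admissible_delta delta ->
  Rbar_lt a b ->
  is_solution delta a b r1 ->
  is_solution delta a b r2 ->
  (exists t, in_open_interval a b t /\ r1 t <> r2 t) ->
  in_open_interval a b tstar ->
  r1 tstar = r2 tstar ->
  forall t, in_open_interval a b t -> t <> tstar -> r1 t <> r2 t.
Proof.
  intros Hdelta _ Hr1 Hr2 [t0 [Ht0 Hne]] Htstar Hrtstar t Ht Htne Hrt.
  assert (Hmeet : forall al be, in_open_interval a b al -> in_open_interval a b be ->
            al < be -> r1 al = r2 al -> r1 be = r2 be -> False).
  { intros al be Hal Hbe Hab Hral Hrbe.
    destruct (Req_dec (Derive r1 al) (Derive r2 al)) as [Hv|Hv].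
    - apply Hne.
      now apply (solutions_eq_of_same_initial_data delta a b r1 r2 Hdelta Hr1 Hr2 al).
    - now apply (solutions_cannot_meet_again delta a b r1 r2 Hdelta Hr1 Hr2 al be). }
  destruct (Rtotal_order t tstar) as [Hlt|[Heq|Hgt]].
  - exact (Hmeet t tstar Ht Htstar Hlt Hrt Hrtstar).
  - contradiction.
  - exact (Hmeet tstar t Htstar Ht Hgt Hrtstar Hrt).
Qed.
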